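(* Let $g\ge2$, let $p$ be a prime with $p\equiv1\pmod{4g}$, and let $K$ be a field of characteristic zero. Let $u(T)$ be the unique element of $1+T^{-1}\mathbb{Z}[[T^{-1}]]$ with $u(T)^{2g}-u(T)^{2g-1}+T^{-4g}=0$, and set $x(T)=T^2u(T)$ and $y(T)=-T\,x(T)^g$ in $\mathbb{Z}[[T^{-1}]][T]\subset K((T^{-1}))$. Let $A$ be the $K$-subalgebra of $K((T^{-1}))$ generated by $x(T)$ and $y(T)$. Then there exist $e_0\in\mathbb{Z}_{(p)}^*$, $a(T)\in A\cap\mathbb{Z}[[T^{-1}]][T]$ and $g(T)\in T^{-1}\mathbb{Z}[[T^{-1}]]$ such that $$T^p-e_0T=a(T)+g(T).$$
   Context: $\mathbb{Z}_{(p)}^*$ denotes the units of the localization of $\mathbb{Z}$ at $p$ (i.e. $p$-adic units in $\mathbb{Q}$). Note $y(T)^2=x(T)^{2g+1}+x(T)$, so $A\cong K[x,y]/(y^2-x^{2g+1}-x)$. *)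

From HB Require Import structures.
From mathcomp Require Import all_boot all_order all_algebra.
Set Implicit Arguments. Unset Strict Implicit. Unset Printing Implicit Defensive.
Import Order.TTheory GRing.Theory Num.Theory.
Local Open Scope ring_scope.

(* Formal Laurent series in T^{-1} over a ring R, i.e. elements of R((T^{-1})).
   [LSer d s] represents  sum_{k >= 0} s k * T^(d - k).
   Every element of R((T^{-1})) has such a representation (pad with zeros). *)
Record lser (R : Type) := LSer { ldeg : nat; lcoef : nat -> R }.

Section LSer.
Variable R : nzRingType.

Definition lcoefT (f : lser R) (n : int) : R :=
  if n <= (ldeg f)%:Z then lcoef f `|(ldeg f)%:Z - n|%N else 0.

Definition lconst (c : R) : lser R := LSer 0 (fun k => if k == 0%N then c else 0).

Definition ladd (f g : lser R) : lser R :=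
  let d := maxn (ldeg f) (ldeg g) in
  LSer d (fun k => lcoefT f (d%:Z - k%:Z) + lcoefT g (d%:Z - k%:Z)).

Definition lopp (f : lser R) : lser R := LSer (ldeg f) (fun k => - lcoef f k).

Definition lmul (f g : lser R) : lser R :=
  LSer (ldeg f + ldeg g)
       (fun k => \sum_(i < k.+1) lcoef f i * lcoef g (k - i)).

Definition lexp (f : lser R) (n : nat) : lser R := iter n (lmul f) (lconst 1).

Definition leq_ser (f g : lser R) : Prop := forall n : int, lcoefT f n = lcoefT g n.

Definition lT : lser R := LSer 1 (fun k => if k == 0%N then 1 else 0).

Definition lTinv : lser R := LSer 0 (fun k => if k == 1%N then 1 else 0).

End LSer.

Inductive in_gen_alg (K : fieldType) (gens : lser K -> Prop) : lser K -> Prop :=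
| gen_const c : in_gen_alg gens (lconst c)
| gen_gen f : gens f -> in_gen_alg gens f
| gen_add f g : in_gen_alg gens f -> in_gen_alg gens g -> in_gen_alg gens (ladd f g)
| gen_mul f g : in_gen_alg gens f -> in_gen_alg gens g -> in_gen_alg gens (lmul f g)
| gen_ext f g : in_gen_alg gens f -> leq_ser f g -> in_gen_alg gens g.

Definition is_intK (K : fieldType) (c : K) : Prop := exists z : int, c = z%:~R.

Definition int_ser (K : fieldType) (f : lser K) : Prop :=
  forall n : int, is_intK (lcoefT f n).

Definition int_neg_ser (K : fieldType) (f : lser K) : Prop :=
  int_ser f /\ forall n : int, 0 <= n -> lcoefT f n = 0.

Definition one_plus_int_neg_ser (K : fieldType) (f : lser K) : Prop :=
  int_ser f /\ lcoefT f 0 = 1 /\ forall n : int, 0 < n -> lcoefT f n = 0.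

Definition unit_Zp (p : nat) (e : rat) : Prop :=
  ~~ (p%:Z %| numq e)%Z /\ ~~ (p%:Z %| denq e)%Z.

Definition xT (K : fieldType) (u : lser K) : lser K := lmul (lexp (lT K) 2) u.
Definition yT (K : fieldType) (g : nat) (u : lser K) : lser K :=
  lopp (lmul (lT K) (lexp (xT u) g)).

From HB Require Import structures.
From mathcomp Require Import all_boot all_order all_algebra.
From mathcomp Require Import boolp zify ring.
Import Order.TTheory GRing.Theory Num.Theory.
Local Open Scope ring_scope.
Set Implicit Arguments. Unset Strict Implicit.

(* Put s = T^-1 and write elements of R((T^-1)) as T^m F(s) with F a power
   series in s.  Then u = U(s) with U(0) = 1, and the defining relation of u
   reads U^(2g-1) = s^(4g) + B with B = U^(2g).  For p = 4gk + 1 and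
   j = (2g-1)k this gives B^j = (s^(4g) + B)^(j+k).  As x = T^2 U and
   y = -T^(2g+1) U^g, multiplying the binomial terms of index j + i by T^p B^-j
   gives C(j+k, j) T for i = 0 and the monomials -C(j+k, j+i) y x^(g(2i-1)) of a
   for 0 < i <= k, while the terms of index < j are divisible by s^(4g(k+1)),
   so that they only contribute to T^p O(s^(p+1)), which lies in T^-1 Z[[T^-1]].
   Finally C(j+k, j) is prime to p since j + k = 2gk < p. *)

Section PowerSeries.
Variable R : comNzRingType.

Definition pser := nat -> R.
HB.instance Definition _ := gen_eqMixin pser.
HB.instance Definition _ := gen_choiceMixin pser.

Definition pser0 : pser := fun _ => 0.
Definition pser_add (f g : pser) : pser := fun k => f k + g k.
Definition pser_opp (f : pser) : pser := fun k => - f k.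

Lemma pser_addA : associative pser_add.
Proof. by move=> f g h; apply: funext => k; rewrite /pser_add addrA. Qed.
Lemma pser_addC : commutative pser_add.
Proof. by move=> f g; apply: funext => k; rewrite /pser_add addrC. Qed.
Lemma pser_add0 : left_id pser0 pser_add.
Proof. by move=> f; apply: funext => k; rewrite /pser_add add0r. Qed.
Lemma pser_addN : left_inverse pser0 pser_opp pser_add.
Proof. by move=> f; apply: funext => k; rewrite /pser_add addNr. Qed.
HB.instance Definition _ :=
  GRing.isZmodule.Build pser pser_addA pser_addC pser_add0 pser_addN.

Definition ptrunc (f : pser) n : {poly R} := \poly_(i < n) f i.
Definition pserC (c : R) : pser := fun k => if k == 0%N then c else 0.

(* The coefficient of X^n of f * g only involves the first n + 1 coefficients,
   so the ring laws are inherited from {poly R} through truncations. *)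
Definition pser_mul (f g : pser) : pser :=
  fun n => (ptrunc f n.+1 * ptrunc g n.+1)`_n.

Lemma coefM_agree (p p' q q' : {poly R}) n :
  (forall i, (i <= n)%N -> p`_i = p'`_i) ->
  (forall i, (i <= n)%N -> q`_i = q'`_i) ->
  (p * q)`_n = (p' * q')`_n.
Proof.
move=> Ep Eq; rewrite !coefM; apply: eq_bigr => i _.
by rewrite Ep -1?ltnS // Eq // leq_subr.
Qed.

Lemma coef_ptrunc (f : pser) n i : (ptrunc f n)`_i = if (i < n)%N then f i else 0.
Proof. by rewrite /ptrunc coef_poly. Qed.

Lemma ptrunc_pser_mul f g n i : (i <= n)%N ->
  (ptrunc (pser_mul f g) n.+1)`_i = (ptrunc f n.+1 * ptrunc g n.+1)`_i.
Proof.
move=> le_in; rewrite coef_ptrunc ltnS le_in.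
by apply: coefM_agree => j le_ji; rewrite !coef_ptrunc !ltnS le_ji (leq_trans le_ji).
Qed.

Lemma pser_mulE f g n : pser_mul f g n = \sum_(i < n.+1) f i * g (n - i)%N.
Proof.
rewrite /pser_mul coefM; apply: eq_bigr => i _.
by rewrite !coef_ptrunc ltn_ord ltnS leq_subr.
Qed.

Lemma pser_mulA : associative pser_mul.
Proof.
move=> f g h; apply: funext => n; rewrite /pser_mul.
rewrite (coefM_agree (p' := ptrunc f n.+1) (q' := ptrunc g n.+1 * ptrunc h n.+1)) //;
  last exact: ptrunc_pser_mul.
rewrite mulrA; apply: coefM_agree => // i le_in.
by rewrite ptrunc_pser_mul.
Qed.

Lemma pser_mulC : commutative pser_mul.
Proof. by move=> f g; apply: funext => n; rewrite /pser_mul mulrC. Qed.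

Lemma pser_mul1 : left_id (pserC 1) pser_mul.
Proof.
move=> f; apply: funext => n; rewrite /pser_mul (@coefM_agree _ 1 _ (ptrunc f n.+1)) //.
  by rewrite mul1r coef_ptrunc ltnSn.
by move=> i le_in; rewrite coef_ptrunc coefC ltnS le_in.
Qed.

Lemma pser_mulDl : left_distributive pser_mul pser_add.
Proof.
move=> f g h; apply: funext => n; rewrite /pser_mul.
rewrite (@coefM_agree _ (ptrunc f n.+1 + ptrunc g n.+1) _ (ptrunc h n.+1)) //.
  by rewrite mulrDl coefD.
by move=> i le_in; rewrite coefD !coef_ptrunc ltnS le_in.
Qed.

Lemma pser1_neq0 : pserC 1 != pser0.
Proof. by apply/eqP => /(congr1 (fun f : pser => f 0%N)) /eqP; rewrite oner_eq0. Qed.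

HB.instance Definition _ := GRing.Zmodule_isComNzRing.Build pser
  pser_mulA pser_mulC pser_mul1 pser_mulDl pser1_neq0.

Lemma coef_pserM (f g : pser) n : (f * g) n = \sum_(i < n.+1) f i * g (n - i)%N.
Proof. exact: pser_mulE. Qed.

Lemma coef_pserD (f g : pser) n : (f + g) n = f n + g n.
Proof. by []. Qed.

Lemma coef_pserN (f : pser) n : (- f) n = - f n.
Proof. by []. Qed.

Lemma coef_pser_sum I (r : seq I) (P : pred I) (F : I -> pser) n :
  (\sum_(i <- r | P i) F i) n = \sum_(i <- r | P i) F i n.
Proof.
elim: r => [|i r IH]; first by rewrite !big_nil.
by rewrite !big_cons; case: (P i) => //; rewrite -IH.
Qed.

Lemma coef_pserMn (f : pser) m n : (f *+ m) n = f n *+ m.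
Proof. by elim: m => [|m IH]; rewrite ?mulr0n // !mulrS -IH. Qed.

Lemma coef0_pserM (f g : pser) : (f * g) 0%N = f 0%N * g 0%N.
Proof. by rewrite coef_pserM big_ord1. Qed.

Lemma coef0_pserX (f : pser) m : (f ^+ m) 0%N = f 0%N ^+ m.
Proof. by elim: m => [|m IH]; rewrite ?expr0 // !exprS coef0_pserM IH. Qed.

Lemma pserCD a b : pserC (a + b) = pserC a + pserC b.
Proof. by apply: funext => k; rewrite coef_pserD /pserC; case: eqP; rewrite ?addr0. Qed.

Lemma pserCN a : pserC (- a) = - pserC a.
Proof. by apply: funext => k; rewrite coef_pserN /pserC; case: eqP; rewrite ?oppr0. Qed.

Lemma pserC_nat m : pserC m%:R = m%:R.
Proof.
elim: m => [|m IH]; last by rewrite !mulrS pserCD IH.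
by apply: funext => k; rewrite /pserC; case: eqP.
Qed.

(* The variable of the power series ring; below it stands for T^-1. *)
Definition pserX : pser := fun k => if k == 1%N then 1 else 0.

Lemma coef_pserXM (f : pser) n : (pserX * f) n = if n is n'.+1 then f n' else 0.
Proof.
rewrite coef_pserM; case: n => [|n]; first by rewrite big_ord1 mul0r.
rewrite !big_ord_recl /pserX /= mul0r mul1r subn1 add0r big1 ?addr0 // => i _.
by rewrite mul0r.
Qed.

Lemma coef_pserXnM m (f : pser) n :
  (pserX ^+ m * f) n = if (m <= n)%N then f (n - m)%N else 0.
Proof.
elim: m n => [|m IH] n; first by rewrite mul1r subn0.
by rewrite exprS -mulrA coef_pserXM; case: n => [|n] //; rewrite IH subSS.
Qed.

End PowerSeries.

Arguments pserX {R}.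

Section Vanishing.
Variable R : comNzRingType.

Definition vanishes_below (N : nat) (F : pser R) := forall n, (n < N)%N -> F n = 0.

Lemma vanishes_below_le N M (F : pser R) :
  (N <= M)%N -> vanishes_below M F -> vanishes_below N F.
Proof. by move=> le_NM vanF n lt_nN; apply: vanF; apply: leq_trans le_NM. Qed.

Lemma vanishes_below_XnM N m (F : pser R) :
  (N <= m)%N -> vanishes_below N (pserX ^+ m * F).
Proof. by move=> le_Nm n lt_nN; rewrite coef_pserXnM ifF //; lia. Qed.

Lemma vanishes_below_sum N I (r : seq I) (P : pred I) (F : I -> pser R) :
  (forall i, P i -> vanishes_below N (F i)) ->
  vanishes_below N (\sum_(i <- r | P i) F i).
Proof.
move=> vanF n lt_nN; rewrite coef_pser_sum big1 // => i Pi.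
exact: vanF.
Qed.

Lemma vanishes_below_Mn N m (F : pser R) :
  vanishes_below N F -> vanishes_below N (F *+ m).
Proof. by move=> vanF n lt_nN; rewrite coef_pserMn vanF ?mul0rn. Qed.

Lemma vanishes_below_mulKl N (V F : pser R) :
  V 0%N = 1 -> vanishes_below N (V * F) -> vanishes_below N F.
Proof.
move=> V0 vanVF; elim/ltn_ind => n IH lt_nN.
have := vanVF n lt_nN; rewrite coef_pserM big_ord_recl V0 mul1r subn0.
rewrite big1 ?addr0 // => i _.
by rewrite IH ?mulr0 //; rewrite lift0; have := ltn_ord i; lia.
Qed.

End Vanishing.

Section Integrality.
Variable K : fieldType.

Lemma is_intKD (a b : K) : is_intK a -> is_intK b -> is_intK (a + b).
Proof. by move=> [x ->] [y ->]; exists (x + y); rewrite rmorphD. Qed.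

Lemma is_intKM (a b : K) : is_intK a -> is_intK b -> is_intK (a * b).
Proof. by move=> [x ->] [y ->]; exists (x * y); rewrite rmorphM. Qed.

Lemma is_intKN (a : K) : is_intK a -> is_intK (- a).
Proof. by move=> [x ->]; exists (- x); rewrite rmorphN. Qed.

Lemma is_intK_nat (m : nat) : is_intK (m%:R : K).
Proof. by exists m. Qed.

Lemma is_intK_sum I (r : seq I) (P : pred I) (F : I -> K) :
  (forall i, is_intK (F i)) -> is_intK (\sum_(i <- r | P i) F i).
Proof.
by move=> intF; apply: (big_ind (@is_intK K)) => //; [exact: (is_intK_nat 0) | exact: is_intKD].
Qed.

Definition int_pser (F : pser K) := forall n, is_intK (F n).

Lemma int_pserD F G : int_pser F -> int_pser G -> int_pser (F + G).
Proof. by move=> intF intG n; apply: is_intKD. Qed.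

Lemma int_pserN F : int_pser F -> int_pser (- F).
Proof. by move=> intF n; apply: is_intKN. Qed.

Lemma int_pserM F G : int_pser F -> int_pser G -> int_pser (F * G).
Proof.
by move=> intF intG n; rewrite coef_pserM; apply: is_intK_sum => i; apply: is_intKM.
Qed.

Lemma int_pser_nat m : int_pser m%:R.
Proof.
by rewrite -pserC_nat => n; rewrite /pserC; case: eqP => _; [exact: is_intK_nat | exact: is_intK_nat 0].
Qed.

Lemma int_pserX F m : int_pser F -> int_pser (F ^+ m).
Proof.
by move=> intF; elim: m => [|m IH]; [exact: int_pser_nat 1 | rewrite exprS; apply: int_pserM].
Qed.

Lemma int_pserMn F m : int_pser F -> int_pser (F *+ m).
Proof. by move=> intF; rewrite -mulr_natr; apply: int_pserM => //; apply: int_pser_nat. Qed.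

Lemma int_pser_sum I (r : seq I) (P : pred I) (F : I -> pser K) :
  (forall i, int_pser (F i)) -> int_pser (\sum_(i <- r | P i) F i).
Proof.
by move=> intF; apply: (big_ind int_pser) => //; [exact: int_pser_nat 0 | exact: int_pserD].
Qed.

Lemma int_pser_pserX : int_pser pserX.
Proof. by move=> n; rewrite /pserX; case: eqP => _; [exact: is_intK_nat 1 | exact: is_intK_nat 0]. Qed.

End Integrality.

Section LaurentExpansion.
Variable R : comNzRingType.

(* [lrepr f m F] : f = T^m F(T^-1) in R((T^-1)); both sides are multiplied by
   T^-(m + ldeg f) so that the comparison takes place among power series. *)
Definition lrepr (f : lser R) (m : nat) (F : pser R) :=
  pserX ^+ m * (lcoef f : pser R) = pserX ^+ ldeg f * F.

Lemma lrepr_coef f m F : lrepr f m F ->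
  forall n : int, lcoefT f n = if n <= m%:Z then F `|m%:Z - n|%N else 0.
Proof.
case: f => d c fmF n; have E j : (if (m <= j)%N then c (j - m)%N else 0)
    = if (d <= j)%N then F (j - d)%N else 0.
  by rewrite -!coef_pserXnM fmF.
rewrite /lcoefT /=; case: ifP => le_nd.
  have := E (m + `|d%:Z - n|)%N; rewrite leq_addr addKn => ->.
  by case: ifP => ?; case: ifP => ? //; try lia; congr F; lia.
case: ifP => le_nm //; have := E (d + `|m%:Z - n|)%N.
by rewrite leq_addr addKn; case: ifP => //; lia.
Qed.

Lemma lrepr_coefE f m F : lrepr f m F -> forall j : nat, F j = lcoefT f (m%:Z - j%:Z).
Proof. by move=> fmF j; rewrite (lrepr_coef fmF) ifT; [congr F|]; lia. Qed.

Lemma lrepr_leq_ser f g m F : lrepr f m F -> lrepr g m F -> leq_ser f g.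
Proof. by move=> fmF gmF n; rewrite (lrepr_coef fmF) (lrepr_coef gmF). Qed.

Lemma leq_ser_lrepr f g m F G : leq_ser f g -> lrepr f m F -> lrepr g m G -> F = G.
Proof.
by move=> fg fmF gmG; apply: funext => j; rewrite (lrepr_coefE fmF) (lrepr_coefE gmG) fg.
Qed.

Lemma lrepr_cast f m F m' F' : lrepr f m F -> m = m' -> F = F' -> lrepr f m' F'.
Proof. by move=> fmF <- <-. Qed.

Lemma lrepr_const c : lrepr (lconst c) 0 (pserC c).
Proof. by rewrite /lrepr /= expr0 !mul1r. Qed.

Lemma lrepr_T : lrepr (lT R) 1 1.
Proof. by []. Qed.

Lemma lrepr_Tinv : lrepr (lTinv R) 0 pserX.
Proof. by rewrite /lrepr /= expr0 !mul1r. Qed.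

Lemma lrepr_mul f g m m' F G :
  lrepr f m F -> lrepr g m' G -> lrepr (lmul f g) (m + m') (F * G).
Proof.
rewrite /lrepr; have -> : lcoef (lmul f g) = (lcoef f : pser R) * lcoef g.
  by apply: funext => n; rewrite coef_pserM.
by rewrite /= !exprD mulrACA => -> ->; rewrite mulrACA.
Qed.

Lemma lrepr_opp f m F : lrepr f m F -> lrepr (lopp f) m (- F).
Proof.
rewrite /lrepr; have -> : lcoef (lopp f) = - (lcoef f : pser R) by [].
by rewrite mulrN => ->; rewrite mulrN.
Qed.

Lemma lrepr_exp f m F n : lrepr f m F -> lrepr (lexp f n) (n * m) (F ^+ n).
Proof.
move=> fmF; elim: n => [|n IH]; first exact: lrepr_const.
by rewrite /lexp iterS exprS mulSn; apply: lrepr_mul.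
Qed.

Lemma lrepr_shift f m F j : lrepr f m F -> lrepr f (m + j) (pserX ^+ j * F).
Proof. by rewrite /lrepr exprD -mulrA mulrCA => ->; rewrite mulrCA. Qed.

Lemma lcoefT_shift f d k : (ldeg f <= d)%N ->
  lcoefT f (d%:Z - k%:Z) = (pserX ^+ (d - ldeg f) * (lcoef f : pser R)) k.
Proof.
case: f => e c /= le_ed; rewrite coef_pserXnM /lcoefT /=.
by case: ifP => ?; case: ifP => ? //; try lia; congr c; lia.
Qed.

Lemma lrepr_add f g m F G : lrepr f m F -> lrepr g m G -> lrepr (ladd f g) m (F + G).
Proof.
rewrite /lrepr => fmF gmG; set d := maxn (ldeg f) (ldeg g).
have -> : lcoef (ladd f g)
    = pserX ^+ (d - ldeg f) * (lcoef f : pser R) + pserX ^+ (d - ldeg g) * lcoef g.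
  by apply: funext => k; rewrite coef_pserD /= -!lcoefT_shift ?leq_maxl ?leq_maxr.
change (ldeg (ladd f g)) with d.
rewrite mulrDr !mulrA -!exprD !(addnC m) !exprD -!mulrA fmF gmG !mulrA -!exprD.
by rewrite !subnK ?leq_maxl ?leq_maxr // mulrDr.
Qed.

Lemma lrepr_big I (r : seq I) (P : pred I) (f : I -> lser R) m (F : I -> pser R) :
  (forall i, P i -> lrepr (f i) m (F i)) ->
  lrepr (\big[@ladd R/lconst 0]_(i <- r | P i) f i) m (\sum_(i <- r | P i) F i).
Proof.
move=> fmF; apply: (big_ind2 (fun f F => lrepr f m F)) => //; first last.
- by move=> *; apply: lrepr_add.
- apply: lrepr_cast (lrepr_shift m (lrepr_const 0)) _ _ => //.
  by rewrite (pserC_nat _ 0) mulr0.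
Qed.

Lemma lrepr_nonpos_support (f : lser R) :
  (forall n : int, 0 < n -> lcoefT f n = 0) ->
  lrepr f 0 (fun j => lcoefT f (- j%:Z)).
Proof.
move=> f_neg; rewrite /lrepr expr0 mul1r; apply: funext => j.
have := lcoefT_shift j (leqnn (ldeg f)); rewrite subnn expr0 mul1r => <-.
by rewrite coef_pserXnM; case: ifP => le_dj; [congr lcoefT | apply: f_neg]; lia.
Qed.

End LaurentExpansion.

Lemma in_gen_alg_exp (K : fieldType) (gens : lser K -> Prop) f n :
  in_gen_alg gens f -> in_gen_alg gens (lexp f n).
Proof.
move=> genf; elim: n => [|n IH]; first exact: gen_const.
by rewrite /lexp iterS; apply: gen_mul.
Qed.

Lemma in_gen_alg_big (K : fieldType) (gens : lser K -> Prop) I (r : seq I) (P : pred I) f :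
  (forall i, P i -> in_gen_alg gens (f i)) ->
  in_gen_alg gens (\big[@ladd K/lconst 0]_(i <- r | P i) f i).
Proof. by move=> genf; apply: big_ind => //; [exact: gen_const | exact: gen_add]. Qed.

Lemma lrepr_int_ser (K : fieldType) (f : lser K) m F :
  lrepr f m F -> int_pser F -> int_ser f.
Proof.
move=> fmF intF n; rewrite (lrepr_coef fmF).
by case: ifP => _; [exact: intF | exact: is_intK_nat 0].
Qed.

Lemma lrepr_int_neg_ser (K : fieldType) (f : lser K) m F :
  lrepr f m F -> int_pser F -> vanishes_below m.+1 F -> int_neg_ser f.
Proof.
move=> fmF intF vanF; split; first exact: lrepr_int_ser fmF intF.
by move=> n n_ge0; rewrite (lrepr_coef fmF); case: ifP => // le_nm; apply: vanF; lia.
Qed.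

Lemma exprDn_split (R : comNzRingType) (a b : R) (j k : nat) :
  (a + b) ^+ (j + k) = \sum_(i < j) a ^+ (j + k - i) * b ^+ i *+ 'C(j + k, i)
    + b ^+ j * \sum_(i < k.+1) a ^+ (k - i) * b ^+ i *+ 'C(j + k, j + i).
Proof.
rewrite exprDn -addnS big_split_ord /= big_distrr /=; congr (_ + _).
apply: eq_bigr => i _; rewrite mulrnAr mulrCA -exprD /=.
by congr (_ ^+ _ * _ ^+ _ *+ _); lia.
Qed.

Section TopBinomialTerms.
Variable R : comNzRingType.
Variables (U : pser R) (g k : nat).
Hypothesis g_gt0 : (0 < g)%N.
Hypothesis U0 : U 0%N = 1.
Hypothesis U_rel : U ^+ (2 * g).-1 = pserX ^+ (4 * g) + U ^+ (2 * g).

Let Z : pser R := pserX ^+ (4 * g).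
Let B : pser R := U ^+ (2 * g).
Let j := ((2 * g).-1 * k)%N.

Lemma expB_binomial : B ^+ j = (Z + B) ^+ (j + k).
Proof.
rewrite -U_rel /B -!exprM; congr (_ ^+ _); rewrite /j.
by case: g g_gt0 => // g' _; rewrite mulnS /=; lia.
Qed.

Lemma top_binomial_terms_vanish :
  vanishes_below (4 * g * k.+1)
    (1 - \sum_(i < k.+1) Z ^+ (k - i) * B ^+ i *+ 'C(j + k, j + i)).
Proof.
apply: (@vanishes_below_mulKl _ _ (B ^+ j)); first by rewrite /B !coef0_pserX U0 !expr1n.
have -> : B ^+ j * (1 - \sum_(i < k.+1) Z ^+ (k - i) * B ^+ i *+ 'C(j + k, j + i))
    = \sum_(i < j) Z ^+ (j + k - i) * B ^+ i *+ 'C(j + k, i).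
  by rewrite mulrBr mulr1 {1}expB_binomial exprDn_split addrK.
apply: vanishes_below_sum => i _; apply: vanishes_below_Mn.
rewrite /Z -exprM; apply: vanishes_below_XnM.
by rewrite leq_mul2l; apply/orP; right; have := ltn_ord i; lia.
Qed.

End TopBinomialTerms.

Section Construction.
Variables (K : fieldType) (g k : nat) (u : lser K).
Hypothesis g_gt0 : (0 < g)%N.
Hypothesis u_one_plus : one_plus_int_neg_ser u.
Hypothesis u_rel : leq_ser (ladd (ladd (lexp u (2 * g)) (lopp (lexp u (2 * g).-1)))
                             (lexp (lTinv K) (4 * g))) (lconst 0).

Let U : pser K := fun j => lcoefT u (- j%:Z).
Let Z : pser K := pserX ^+ (4 * g).
Let B : pser K := U ^+ (2 * g).
Let j := ((2 * g).-1 * k)%N.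
Let p := (4 * g * k).+1.

Lemma lrepr_u : lrepr u 0 U.
Proof. exact/lrepr_nonpos_support/u_one_plus.2.2. Qed.

Lemma lrepr_xT : lrepr (xT u) 2 U.
Proof.
apply: lrepr_cast (lrepr_mul (lrepr_exp 2 (lrepr_T K)) lrepr_u) _ _ => //.
by rewrite expr1n mul1r.
Qed.

Lemma lrepr_yT : lrepr (yT g u) (2 * g).+1 (- U ^+ g).
Proof.
apply: lrepr_cast (lrepr_opp (lrepr_mul (lrepr_T K) (lrepr_exp g lrepr_xT))) _ _.
  by rewrite add1n mulnC.
by rewrite mul1r.
Qed.

Lemma U_rel : U ^+ (2 * g).-1 = Z + B.
Proof.
have urel : lrepr (ladd (ladd (lexp u (2 * g)) (lopp (lexp u (2 * g).-1)))
                   (lexp (lTinv K) (4 * g))) 0 (B - U ^+ (2 * g).-1 + Z).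
  have lrepr_exp0 f F n : lrepr f 0 F -> lrepr (lexp f n) 0 (F ^+ n).
    by move=> fF; apply: lrepr_cast (lrepr_exp n fF) _ _; rewrite ?muln0.
  apply: lrepr_add; first by apply: lrepr_add; last apply: lrepr_opp; apply: lrepr_exp0 lrepr_u.
  exact: lrepr_exp0 (lrepr_Tinv K).
have := leq_ser_lrepr u_rel urel (lrepr_const 0).
by rewrite (pserC_nat _ 0) => /eqP; rewrite addrAC subr_eq0 addrC => /eqP.
Qed.

(* - c y x^(g(2i+1)) = c T x^(2g(i+1)) = T^p (c Z^(k-i-1) B^(i+1)) *)
Definition a_ser : lser K := \big[@ladd K/lconst 0]_(i < k)
  lmul (lconst (- 'C(j + k, j + i.+1)%:R)) (lmul (yT g u) (lexp (xT u) (g * (2 * i).+1))).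

Lemma lrepr_a_ser :
  lrepr a_ser p (\sum_(i < k) Z ^+ (k - i.+1) * B ^+ i.+1 *+ 'C(j + k, j + i.+1)).
Proof.
apply: lrepr_big => i _; set c := 'C(_, _).
have term := lrepr_shift (4 * g * (k - i.+1))
  (lrepr_mul (lrepr_const (- c%:R)) (lrepr_mul lrepr_yT (lrepr_exp (g * (2 * i).+1) lrepr_xT))).
apply: lrepr_cast term _ _; first by have := ltn_ord i; rewrite /p; nia.
rewrite pserCN pserC_nat /Z /B -!exprM mulNr mulNr -exprD.
have -> : (g + g * (2 * i).+1 = 2 * g * i.+1)%N by nia.
ring.
Qed.

Definition tp_ser : lser K :=
  ladd (lexp (lT K) p) (lopp (lmul (lconst (ratr 'C(j + k, j)%:~R)) (lT K))).

Definition g_ser : lser K := ladd tp_ser (lopp a_ser).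

Lemma lrepr_tp_ser : lrepr tp_ser p (1 - Z ^+ k *+ 'C(j + k, j)).
Proof.
apply: lrepr_add; first by apply: lrepr_cast (lrepr_exp p (lrepr_T K)) _ _; rewrite ?muln1 ?expr1n.
apply/lrepr_opp/(lrepr_cast (lrepr_shift (4 * g * k) (lrepr_mul (lrepr_const _) (lrepr_T K)))).
  by rewrite add0n add1n.
by rewrite ratr_int -pmulrn pserC_nat mulr1 /Z -exprM mulr_natr.
Qed.

Lemma lrepr_g_ser :
  lrepr g_ser p (1 - \sum_(i < k.+1) Z ^+ (k - i) * B ^+ i *+ 'C(j + k, j + i)).
Proof.
apply: lrepr_cast (lrepr_add lrepr_tp_ser (lrepr_opp lrepr_a_ser)) _ _ => //.
by rewrite big_ord_recl subn0 expr0 mulr1 addn0 opprD addrA.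
Qed.

Lemma int_U : int_pser U.
Proof. by move=> n; apply: u_one_plus.1. Qed.

Lemma int_pser_ZB m e c : int_pser (Z ^+ m * B ^+ e *+ c).
Proof.
by apply/int_pserMn/int_pserM; apply/int_pserX/int_pserX; [exact: int_pser_pserX | exact: int_U].
Qed.

Lemma tp_ser_decomposition :
  [/\ in_gen_alg (fun f => f = xT u \/ f = yT g u) a_ser, int_ser a_ser,
      int_neg_ser g_ser & leq_ser tp_ser (ladd a_ser g_ser)].
Proof.
have int_S : int_pser (1 - \sum_(i < k.+1) Z ^+ (k - i) * B ^+ i *+ 'C(j + k, j + i)).
  by apply/int_pserD/int_pserN/int_pser_sum => [|i]; [exact: int_pser_nat 1 | exact: int_pser_ZB].
split.
- apply: in_gen_alg_big => i _; apply/gen_mul/gen_mul; first exact: gen_const.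
    by apply: gen_gen; right.
  by apply/in_gen_alg_exp/gen_gen; left.
- by apply: lrepr_int_ser lrepr_a_ser _; apply: int_pser_sum => i; exact: int_pser_ZB.
- apply: lrepr_int_neg_ser lrepr_g_ser int_S _.
  have U0 : U 0%N = 1 by exact: u_one_plus.2.1.
  apply: vanishes_below_le (top_binomial_terms_vanish g_gt0 U0 U_rel).
  by rewrite /p; lia.
- apply: lrepr_leq_ser lrepr_tp_ser _.
  apply: lrepr_cast (lrepr_add lrepr_a_ser lrepr_g_ser) _ _ => //.
  by rewrite big_ord_recl subn0 expr0 mulr1 addn0 addrC opprD addrA subrK.
Qed.

End Construction.

Lemma prime_dvdn_fact p m : prime p -> (p %| m`!)%N = (p <= m)%N.
Proof.
move=> p_pr; apply/idP/idP => [|le_pm]; last by rewrite dvdn_fact // prime_gt0.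
elim: m => [|m IH]; first by rewrite dvdn1 => /eqP p1; rewrite p1 in p_pr.
rewrite factS Euclid_dvdM // => /orP[/dvdn_leq-> //|/IH]; exact: leqW.
Qed.

Lemma unit_Zp_binomial p n j :
  prime p -> (j <= n < p)%N -> unit_Zp p ('C(n, j)%:~R).
Proof.
move=> p_pr /andP[le_jn lt_np]; rewrite /unit_Zp numq_int denq_int !dvdzE /=.
split; last by rewrite dvdn1; apply/eqP => p1; rewrite p1 in p_pr.
apply/negP => dvd_pC; move: (dvdn_mulr (j`! * (n - j)`!) dvd_pC).
by rewrite bin_fact // prime_dvdn_fact // leqNgt lt_np.
Qed.

Unset Implicit Arguments.
Theorem lemma4p2 (g p : nat) (K : fieldType) (u : lser K) :
  (2 <= g)%N -> prime p -> (p %% (4 * g))%N = 1%N ->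
  [pchar K] =i pred0 ->
  one_plus_int_neg_ser u ->
  leq_ser (ladd (ladd (lexp u (2 * g)) (lopp (lexp u (2 * g).-1)))
                (lexp (lTinv K) (4 * g)))
          (lconst 0) ->
  exists (e0 : rat) (a gT : lser K),
    [/\ unit_Zp p e0,
        in_gen_alg (fun f => f = xT u \/ f = yT g u) a /\ int_ser a,
        int_neg_ser gT &
        leq_ser (ladd (lexp (lT K) p) (lopp (lmul (lconst (ratr e0)) (lT K))))
                (ladd a gT)].
Proof.
move=> g_ge2 p_prime p_mod _ u_one_plus u_rel.
have g_gt0 : (0 < g)%N by apply: leq_trans g_ge2.
set k := (p %/ (4 * g))%N; set j := ((2 * g).-1 * k)%N.
have p_eq : p = (4 * g * k).+1 by rewrite {1}(divn_eq p (4 * g)) p_mod addn1 mulnC.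
have [gen_a int_a neg_g decomp] := tp_ser_decomposition k g_gt0 u_one_plus u_rel.
exists (('C(j + k, j))%:~R), (a_ser g k u), (g_ser g k u).
split=> //; last by rewrite p_eq.
by apply: unit_Zp_binomial => //; rewrite leq_addr /= p_eq /j; lia.
Qed.
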